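(* There exists a constant $C>0$ such that for all $x>0$, \[ \sum_{k\in\mathbf{Z}}|k|\,J_k(x)^2\le C\,x . \]
   Context: For $n\in\mathbf{Z}$ and $z\in\mathbf{C}$, $J_n(z)=\frac{1}{2\pi}\int_{-\pi}^{\pi}e^{i(nu-z\sin u)}\,du$ is the Bessel function of the first kind. *)

From Stdlib Require Import Reals ZArith.
From Coquelicot Require Import Coquelicot.
Open Scope R_scope.

Definition cexp (w : C) : C :=
  (exp (Re w) * cos (Im w), exp (Re w) * sin (Im w)).

Definition BesselJ (n : Z) (z : C) : C :=
  Cmult (RtoC (/ (2 * PI)))
    (RInt (V := C_R_CompleteNormedModule)
       (fun u : R => cexp (Cmult Ci (Cminus (RtoC (IZR n * u)) (Cmult z (RtoC (sin u))))))
       (- PI) PI).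

From Stdlib Require Import Reals ZArith Lra Lia.
From Coquelicot Require Import Coquelicot.
Open Scope R_scope.

(** Write J_K(x) = A(K)/(2 pi) with A(K) = int_{-pi}^{pi} cos (K u - x sin u) du: the
    sine part of the defining integral vanishes because its integrand is odd.
    Integrating the derivative of sin (K u - x sin u) over a period gives
    K A(K) = x B(K), where B(K) = int cos u cos (K u - x sin u) du, hence
    |K| A(K)^2 = x |A(K) B(K)| <= x (A(K)^2 + B(K)^2) / 2.
    Expanding the cosine, A(k) and A(-k) are the sum and difference of the k-th cosine
    and sine Fourier coefficients of cos (x sin u) and sin (x sin u) (likewise for B
    with the weight cos u), so Bessel's inequality bounds sum_k (A(k)^2 + A(-k)^2) and
    sum_k (B(k)^2 + B(-k)^2) by 16 pi^2, uniformly in x.  Altogether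
    sum_k |k| J_k(x)^2 <= 4 x. *)

Ltac continuity_tac :=
  repeat first
    [ assumption
    | match goal with H : forall _, continuity _ |- _ => apply H end
    | apply continuity_plus | apply continuity_minus | apply continuity_mult
    | reg ].

Lemma ex_RInt_continuity (f : R -> R) a b : continuity f -> ex_RInt f a b.
Proof.
  intros Hf. apply (ex_RInt_continuous (V := R_CompleteNormedModule)).
  intros z _. apply continuity_pt_filterlim, Hf.
Qed.

Lemma RInt_ext_R (f g : R -> R) a b : (forall u, f u = g u) -> RInt f a b = RInt g a b.
Proof. intros Hfg. apply RInt_ext. intros u _. apply Hfg. Qed.

Lemma RInt_plus_cont (f g : R -> R) a b : continuity f -> continuity g ->
  RInt (fun u => f u + g u) a b = RInt f a b + RInt g a b.
Proof.
  intros Hf Hg.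
  apply (RInt_plus (V := R_CompleteNormedModule)); apply ex_RInt_continuity; assumption.
Qed.

Lemma RInt_minus_cont (f g : R -> R) a b : continuity f -> continuity g ->
  RInt (fun u => f u - g u) a b = RInt f a b - RInt g a b.
Proof.
  intros Hf Hg.
  apply (RInt_minus (V := R_CompleteNormedModule)); apply ex_RInt_continuity; assumption.
Qed.

Lemma RInt_scal_cont (f : R -> R) c a b : continuity f ->
  RInt (fun u => c * f u) a b = c * RInt f a b.
Proof.
  intros Hf. apply (RInt_scal (V := R_CompleteNormedModule)), ex_RInt_continuity, Hf.
Qed.

Lemma continuity_sum_f_R0 (g : nat -> R -> R) n : (forall k, continuity (g k)) ->
  continuity (fun u => sum_f_R0 (fun k => g k u) n).
Proof. intros Hg. induction n as [|n IH]; simpl; [apply Hg | apply continuity_plus; auto]. Qed.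

Lemma RInt_sum_f_R0_cont (g : nat -> R -> R) n a b : (forall k, continuity (g k)) ->
  RInt (fun u => sum_f_R0 (fun k => g k u) n) a b = sum_f_R0 (fun k => RInt (g k) a b) n.
Proof.
  intros Hg. induction n as [|n IH]; simpl; [reflexivity|].
  rewrite RInt_plus_cont, IH; [reflexivity | apply continuity_sum_f_R0; assumption | apply Hg].
Qed.

Lemma RInt_le_const_cont (f : R -> R) a b M : a <= b -> continuity f ->
  (forall u, f u <= M) -> RInt f a b <= (b - a) * M.
Proof.
  intros Hab Hf HM. replace ((b - a) * M) with (RInt (fun _ => M) a b)
    by (rewrite RInt_const; reflexivity).
  apply RInt_le; auto; apply ex_RInt_continuity; [assumption | reg].
Qed.

Lemma RInt_ge0_cont (f : R -> R) a b : a <= b -> continuity f ->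
  (forall u, 0 <= f u) -> 0 <= RInt f a b.
Proof.
  intros Hab Hf Hf0.
  replace 0 with (RInt (fun _ => 0) a b) by (rewrite RInt_const; apply Rmult_0_r).
  apply RInt_le; auto; apply ex_RInt_continuity; [reg | assumption].
Qed.

Lemma RInt_derive_cont (f df : R -> R) a b :
  (forall u, is_derive f u (df u)) -> continuity df -> RInt df a b = f b - f a.
Proof.
  intros Hd Hdf. apply is_RInt_unique, (is_RInt_derive (V := R_CompleteNormedModule)).
  - intros u _. apply Hd.
  - intros u _. apply continuity_pt_filterlim, Hdf.
Qed.

Lemma RInt_odd (f : R -> R) a : continuity f -> (forall u, f (- u) = - f u) ->
  RInt f (- a) a = 0.
Proof.
  intros Hf Hodd.
  assert (HI : is_RInt f (- a) (- - a) (RInt f (- a) a)).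
  { rewrite Ropp_involutive.
    apply (RInt_correct (V := R_CompleteNormedModule)), ex_RInt_continuity, Hf. }
  apply (is_RInt_comp_opp (V := R_NormedModule)) in HI.
  assert (Hrefl : is_RInt f a (- a) (RInt f (- a) a)).
  { apply (is_RInt_ext (V := R_NormedModule) _ _ _ _ _) with (2 := HI).
    intros u _. change (opp ?y) with (- y). rewrite Hodd. apply Ropp_involutive. }
  apply (is_RInt_swap (V := R_NormedModule)),
    (is_RInt_unique (V := R_CompleteNormedModule)) in Hrefl.
  change (opp ?y) with (- y) in Hrefl. lra.
Qed.

Lemma sum_f_R0_single (f : nat -> R) k n : (k <= n)%nat ->
  (forall j, j <> k -> f j = 0) -> sum_f_R0 f n = f k.
Proof.
  intros Hk Hf. induction n as [|n IH]; simpl.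
  - replace k with 0%nat by lia. reflexivity.
  - destruct (Nat.eq_dec k (S n)) as [-> | Hne].
    + rewrite sum_eq_R0; [ring | intros j Hj; apply Hf; lia].
    + rewrite IH, (Hf (S n)) by lia. ring.
Qed.

Section Bessel_inequality.

Variables (a b D : R) (phi : R -> R) (e : nat -> R -> R).
Hypotheses (D_gt0 : 0 < D) (a_le_b : a <= b).
Hypotheses (phi_cont : continuity phi) (e_cont : forall k, continuity (e k)).
Hypothesis e_orth : forall j k, j <> k -> RInt (fun u => e j u * e k u) a b = 0.
Hypothesis e_norm_le : forall k, RInt (fun u => e k u * e k u) a b <= D.

Let c k := RInt (fun u => phi u * e k u) a b.
Let S n u := sum_f_R0 (fun k => c k * e k u) n.

Let ce_cont k : continuity (fun u => c k * e k u).
Proof. continuity_tac. Qed.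

Let S_cont n : continuity (S n).
Proof. apply continuity_sum_f_R0, ce_cont. Qed.

Let RInt_phi_S n : RInt (fun u => phi u * S n u) a b = sum_f_R0 (fun k => c k ^ 2) n.
Proof.
  rewrite (RInt_ext_R _ (fun u => sum_f_R0 (fun k => c k * (phi u * e k u)) n)).
  - rewrite RInt_sum_f_R0_cont by (intro k; continuity_tac).
    apply sum_eq. intros k _. rewrite RInt_scal_cont by continuity_tac. unfold c. ring.
  - intros u. unfold S. rewrite scal_sum. apply sum_eq. intros k _. ring.
Qed.

Let RInt_e_S j n : (j <= n)%nat ->
  RInt (fun u => e j u * S n u) a b = c j * RInt (fun u => e j u * e j u) a b.
Proof.
  intros Hj.
  rewrite (RInt_ext_R _ (fun u => sum_f_R0 (fun k => c k * (e j u * e k u)) n)).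
  - rewrite RInt_sum_f_R0_cont by (intro k; continuity_tac).
    rewrite (sum_f_R0_single _ j n Hj).
    + apply RInt_scal_cont. continuity_tac.
    + intros k Hk. rewrite RInt_scal_cont, (e_orth j k) by (auto; continuity_tac). ring.
  - intros u. unfold S. rewrite scal_sum. apply sum_eq. intros k _. ring.
Qed.

Let RInt_S_sq_le n : RInt (fun u => S n u * S n u) a b <= D * sum_f_R0 (fun k => c k ^ 2) n.
Proof.
  rewrite (RInt_ext_R _ (fun u => sum_f_R0 (fun k => c k * (e k u * S n u)) n)).
  - rewrite RInt_sum_f_R0_cont by (intro k; continuity_tac).
    rewrite scal_sum. apply sum_Rle. intros k Hk.
    rewrite RInt_scal_cont, RInt_e_S by (auto; continuity_tac).
    pose proof (e_norm_le k). pose proof (pow2_ge_0 (c k)). nra.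
  - intros u. unfold S at 1. rewrite Rmult_comm, scal_sum. apply sum_eq. intros k _. ring.
Qed.

Theorem bessel_inequality n :
  sum_f_R0 (fun k => c k ^ 2) n <= D * RInt (fun u => phi u * phi u) a b.
Proof.
  (* with T = sum c_k^2:
     0 <= int (D phi - S)^2 = D^2 int phi^2 - 2 D T + int S^2 <= D (D int phi^2 - T) *)
  assert (Hsq : 0 <= RInt (fun u => (D * phi u - S n u) * (D * phi u - S n u)) a b).
  { apply RInt_ge0_cont; [assumption | continuity_tac | intros u; apply Rle_0_sqr]. }
  rewrite (RInt_ext_R _ (fun u => D ^ 2 * (phi u * phi u) - 2 * D * (phi u * S n u)
                                 + S n u * S n u)) in Hsq by (intro u; ring).
  rewrite RInt_plus_cont, RInt_minus_cont, !RInt_scal_cont, RInt_phi_S in Hsq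
    by continuity_tac.
  pose proof (RInt_S_sq_le n).
  apply Rmult_le_reg_l with D; [assumption | nra].
Qed.

End Bessel_inequality.

Lemma sin_IZR_mult_PI (m : Z) : sin (IZR m * PI) = 0.
Proof. apply sin_eq_0_1. exists m. reflexivity. Qed.

Lemma RInt_cos_IZR_mult (m : Z) : m <> 0%Z ->
  RInt (fun u => cos (IZR m * u)) (- PI) PI = 0 :> R.
Proof.
  intros Hm. apply not_0_IZR in Hm.
  rewrite (RInt_derive_cont (fun u => sin (IZR m * u) / IZR m)).
  - replace (IZR m * - PI) with (- (IZR m * PI)) by ring.
    rewrite sin_neg, sin_IZR_mult_PI. field. exact Hm.
  - intro u. auto_derive; [exact I | field; exact Hm].
  - reg.
Qed.

Lemma RInt_cos_cos_orth j k : j <> k ->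
  RInt (fun u => cos (INR j * u) * cos (INR k * u)) (- PI) PI = 0 :> R.
Proof.
  intros Hjk. rewrite !INR_IZR_INZ.
  rewrite (RInt_ext_R _ (fun u => / 2 * cos (IZR (Z.of_nat j - Z.of_nat k) * u)
                                + / 2 * cos (IZR (Z.of_nat j + Z.of_nat k) * u))).
  - rewrite RInt_plus_cont, !RInt_scal_cont, !RInt_cos_IZR_mult by (lia || reg). ring.
  - intro u. rewrite minus_IZR, plus_IZR, Rmult_minus_distr_r, Rmult_plus_distr_r.
    rewrite cos_minus, cos_plus. field.
Qed.

Lemma RInt_sin_sin_orth j k : j <> k ->
  RInt (fun u => sin (INR j * u) * sin (INR k * u)) (- PI) PI = 0 :> R.
Proof.
  intros Hjk. rewrite !INR_IZR_INZ.
  rewrite (RInt_ext_R _ (fun u => / 2 * cos (IZR (Z.of_nat j - Z.of_nat k) * u)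
                                - / 2 * cos (IZR (Z.of_nat j + Z.of_nat k) * u))).
  - rewrite RInt_minus_cont, !RInt_scal_cont, !RInt_cos_IZR_mult by (lia || reg). ring.
  - intro u. rewrite minus_IZR, plus_IZR, Rmult_minus_distr_r, Rmult_plus_distr_r.
    rewrite cos_minus, cos_plus. field.
Qed.

Lemma cos_sqr_le_1 t : cos t * cos t <= 1.
Proof. pose proof (sin2_cos2 t). pose proof (Rle_0_sqr (sin t)). unfold Rsqr in *. lra. Qed.

Lemma sin_sqr_le_1 t : sin t * sin t <= 1.
Proof. pose proof (sin2_cos2 t). pose proof (Rle_0_sqr (cos t)). unfold Rsqr in *. lra. Qed.

Lemma sqr_le_1_mult a b : a * a <= 1 -> b * b <= 1 -> (a * b) * (a * b) <= 1.
Proof. intros Ha Hb. pose proof (Rle_0_sqr a). pose proof (Rle_0_sqr b). unfold Rsqr in *. nra. Qed.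

Lemma RInt_sqr_le_2PI (f : R -> R) : continuity f -> (forall u, f u * f u <= 1) ->
  RInt (fun u => f u * f u) (- PI) PI <= 2 * PI.
Proof.
  intros Hf Hf1. pose proof PI_RGT_0.
  replace (2 * PI) with ((PI - - PI) * 1) by ring.
  apply RInt_le_const_cont; [lra | continuity_tac | exact Hf1].
Qed.

Lemma bessel_inequality_unit_bounded (phi : R -> R) (e : nat -> R -> R) n :
  continuity phi -> (forall u, phi u * phi u <= 1) ->
  (forall k, continuity (e k)) -> (forall k u, e k u * e k u <= 1) ->
  (forall j k, j <> k -> RInt (fun u => e j u * e k u) (- PI) PI = 0 :> R) ->
  sum_f_R0 (fun k => RInt (fun u => phi u * e k u) (- PI) PI ^ 2) n <= 4 * PI ^ 2.
Proof.
  intros Hphi Hphi1 He He1 Horth. pose proof PI_RGT_0.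
  eapply Rle_trans.
  - apply (bessel_inequality (- PI) PI (2 * PI)); [lra | lra | assumption .. |].
    intro k. apply RInt_sqr_le_2PI; [apply He | apply He1].
  - pose proof (RInt_sqr_le_2PI phi Hphi Hphi1). nra.
Qed.

Definition fourier_cos (phi : R -> R) (K : R) : R :=
  RInt (fun u => phi u * cos (K * u)) (- PI) PI.

Definition fourier_sin (phi : R -> R) (K : R) : R :=
  RInt (fun u => phi u * sin (K * u)) (- PI) PI.

Lemma sum_fourier_cos_sq_le (phi : R -> R) n :
  continuity phi -> (forall u, phi u * phi u <= 1) ->
  sum_f_R0 (fun k => fourier_cos phi (INR k) ^ 2) n <= 4 * PI ^ 2.
Proof.
  intros Hphi Hphi1.
  apply (bessel_inequality_unit_bounded phi (fun k u => cos (INR k * u)));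
    [assumption | assumption | intro k; reg | intros k u; apply cos_sqr_le_1 |].
  exact RInt_cos_cos_orth.
Qed.

Lemma sum_fourier_sin_sq_le (phi : R -> R) n :
  continuity phi -> (forall u, phi u * phi u <= 1) ->
  sum_f_R0 (fun k => fourier_sin phi (INR k) ^ 2) n <= 4 * PI ^ 2.
Proof.
  intros Hphi Hphi1.
  apply (bessel_inequality_unit_bounded phi (fun k u => sin (INR k * u)));
    [assumption | assumption | intro k; reg | intros k u; apply sin_sqr_le_1 |].
  exact RInt_sin_sin_orth.
Qed.

Definition bessel_int (w : R -> R) (x K : R) : R :=
  RInt (fun u => w u * cos (K * u - x * sin u)) (- PI) PI.

Lemma bessel_int_fourier (w : R -> R) x K : continuity w ->
  bessel_int w x K = fourier_cos (fun u => w u * cos (x * sin u)) K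
                     + fourier_sin (fun u => w u * sin (x * sin u)) K.
Proof.
  intros Hw. unfold bessel_int, fourier_cos, fourier_sin.
  rewrite <- RInt_plus_cont by continuity_tac.
  apply RInt_ext_R. intro u. rewrite cos_minus. ring.
Qed.

Lemma bessel_int_opp_fourier (w : R -> R) x K : continuity w ->
  bessel_int w x (- K) = fourier_cos (fun u => w u * cos (x * sin u)) K
                         - fourier_sin (fun u => w u * sin (x * sin u)) K.
Proof.
  intros Hw. unfold bessel_int, fourier_cos, fourier_sin.
  rewrite <- RInt_minus_cont by continuity_tac.
  apply RInt_ext_R. intro u.
  replace (- K * u - x * sin u) with (- (K * u + x * sin u)) by ring.
  rewrite cos_neg, cos_plus. ring.
Qed.

Lemma sum_bessel_int_sq_le (w : R -> R) x n :
  continuity w -> (forall u, w u * w u <= 1) ->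
  sum_f_R0 (fun k => bessel_int w x (INR k) ^ 2 + bessel_int w x (- INR k) ^ 2) n
    <= 16 * PI ^ 2.
Proof.
  intros Hw Hw1.
  set (phic u := w u * cos (x * sin u)). set (phis u := w u * sin (x * sin u)).
  assert (Hc : sum_f_R0 (fun k => fourier_cos phic (INR k) ^ 2) n <= 4 * PI ^ 2).
  { apply sum_fourier_cos_sq_le; unfold phic; [continuity_tac |].
    intro u. apply sqr_le_1_mult; [apply Hw1 | apply cos_sqr_le_1]. }
  assert (Hs : sum_f_R0 (fun k => fourier_sin phis (INR k) ^ 2) n <= 4 * PI ^ 2).
  { apply sum_fourier_sin_sq_le; unfold phis; [continuity_tac |].
    intro u. apply sqr_le_1_mult; [apply Hw1 | apply sin_sqr_le_1]. }
  rewrite (sum_eq _ (fun k => (fourier_cos phic (INR k) ^ 2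
                               + fourier_sin phis (INR k) ^ 2) * 2)).
  - rewrite <- scal_sum, plus_sum. lra.
  - intros k _. unfold phic, phis.
    rewrite bessel_int_fourier, bessel_int_opp_fourier by exact Hw. ring.
Qed.

Lemma bessel_int_recurrence x K : sin (K * PI) = 0 ->
  K * bessel_int (fun _ => 1) x K = x * bessel_int cos x K.
Proof.
  intros HK. unfold bessel_int.
  rewrite <- !RInt_scal_cont by continuity_tac.
  apply Rminus_diag_uniq.
  rewrite <- RInt_minus_cont by continuity_tac.
  rewrite (RInt_ext_R _ (fun u => (K - x * cos u) * cos (K * u - x * sin u)))
    by (intro u; ring).
  rewrite (RInt_derive_cont (fun u => sin (K * u - x * sin u))).
  - rewrite sin_neg, sin_PI.
    replace (K * PI - x * 0) with (K * PI) by ring.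
    replace (K * - PI - x * - 0) with (- (K * PI)) by ring.
    rewrite sin_neg, HK. ring.
  - intro u. auto_derive; [exact I | unfold Rminus; ring].
  - reg.
Qed.

Lemma abs_mult_bessel_int_sq_le x K : 0 <= x -> sin (K * PI) = 0 ->
  Rabs K * bessel_int (fun _ => 1) x K ^ 2
    <= x / 2 * (bessel_int (fun _ => 1) x K ^ 2 + bessel_int cos x K ^ 2).
Proof.
  intros Hx HK. pose proof (bessel_int_recurrence x K HK) as Hrec.
  set (A := bessel_int (fun _ => 1) x K) in *. set (Ac := bessel_int cos x K) in *.
  assert (HKA : K * A ^ 2 = x * (A * Ac))
    by (replace (K * A ^ 2) with ((K * A) * A) by ring; rewrite Hrec; ring).
  assert (0 <= x * (A - Ac) ^ 2) by (apply Rmult_le_pos; [exact Hx | apply pow2_ge_0]).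
  assert (0 <= x * (A + Ac) ^ 2) by (apply Rmult_le_pos; [exact Hx | apply pow2_ge_0]).
  destruct (Rcase_abs K); [rewrite Rabs_left | rewrite Rabs_right]; nra.
Qed.

Lemma sum_mult_bessel_int_sq_le x n : 0 <= x ->
  sum_f_R0 (fun k => INR k * (bessel_int (fun _ => 1) x (INR k) ^ 2
                              + bessel_int (fun _ => 1) x (- INR k) ^ 2)) n
    <= 16 * PI ^ 2 * x.
Proof.
  intros Hx.
  set (A := bessel_int (fun _ => 1) x). set (Ac := bessel_int cos x).
  assert (Hterm : forall k, INR k * (A (INR k) ^ 2 + A (- INR k) ^ 2)
    <= ((A (INR k) ^ 2 + A (- INR k) ^ 2) + (Ac (INR k) ^ 2 + Ac (- INR k) ^ 2)) * (x / 2)).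
  { intro k. rewrite INR_IZR_INZ.
    pose proof (abs_mult_bessel_int_sq_le x _ Hx (sin_IZR_mult_PI (Z.of_nat k))).
    pose proof (abs_mult_bessel_int_sq_le x _ Hx (sin_IZR_mult_PI (- Z.of_nat k))).
    rewrite opp_IZR, Rabs_Ropp in *. rewrite Rabs_right in * by (apply Rle_ge, IZR_le; lia).
    unfold A, Ac. lra. }
  eapply Rle_trans; [apply sum_Rle; intros k _; apply Hterm |].
  rewrite <- scal_sum, plus_sum.
  pose proof (sum_bessel_int_sq_le (fun _ => 1) x n ltac:(reg) ltac:(intro; lra)).
  pose proof (sum_bessel_int_sq_le cos x n continuity_cos cos_sqr_le_1).
  unfold A, Ac. nra.
Qed.

Lemma cexp_i_mult (t : R) : cexp (Cmult Ci (RtoC t)) = (cos t, sin t).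
Proof.
  unfold cexp, Cmult, Ci, RtoC; simpl.
  replace (0 * t - 1 * 0) with 0 by ring. replace (0 * 0 + 1 * t) with t by ring.
  rewrite exp_0, !Rmult_1_l. reflexivity.
Qed.

Lemma BesselJ_RtoC n x :
  BesselJ n (RtoC x) = RtoC (bessel_int (fun _ => 1) x (IZR n) / (2 * PI)).
Proof.
  pose proof PI_RGT_0. unfold BesselJ.
  rewrite (RInt_ext (V := C_R_CompleteNormedModule) _
             (fun u => (cos (IZR n * u - x * sin u), sin (IZR n * u - x * sin u)))).
  - rewrite (is_RInt_unique (V := C_R_CompleteNormedModule) _ _ _
               (bessel_int (fun _ => 1) x (IZR n), 0)).
    + unfold Cmult, RtoC; simpl. f_equal; field; lra.
    + apply is_RInt_fct_extend_pair; simpl.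
      * apply (is_RInt_ext (V := R_NormedModule) (fun u => 1 * cos (IZR n * u - x * sin u))).
        { intros u _. apply Rmult_1_l. }
        apply (RInt_correct (V := R_CompleteNormedModule)), ex_RInt_continuity. reg.
      * rewrite <- (RInt_odd (fun u => sin (IZR n * u - x * sin u)) PI).
        -- apply (RInt_correct (V := R_CompleteNormedModule)), ex_RInt_continuity. reg.
        -- reg.
        -- intro u. rewrite sin_neg.
           replace (IZR n * - u - x * - sin u) with (- (IZR n * u - x * sin u)) by ring.
           apply sin_neg.
  - intros u _. rewrite <- cexp_i_mult. f_equal. f_equal.
    unfold Cminus, Cplus, Copp, Cmult, RtoC; simpl. f_equal; ring.
Qed.

Lemma sum_n_RtoC (a : nat -> R) n :
  sum_n (G := C_AbelianMonoid) (fun k => RtoC (a k)) n = RtoC (sum_f_R0 a n).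
Proof.
  induction n as [|n IH].
  - apply sum_O.
  - rewrite sum_Sn, IH. unfold plus; simpl. unfold Cplus, RtoC; simpl. f_equal. ring.
Qed.

Lemma is_series_RtoC_bounded (a : nat -> R) M :
  (forall k, 0 <= a k) -> (forall n, sum_f_R0 a n <= M) ->
  exists l, is_series (K := C_AbsRing) (V := C_NormedModule)
              (fun k => RtoC (a k)) (RtoC l) /\ l <= M.
Proof.
  intros Ha HM.
  assert (Hgrow : Un_growing (sum_f_R0 a)) by (intro n; simpl; pose proof (Ha (S n)); lra).
  assert (Hub : has_ub (sum_f_R0 a)) by (exists M; intros y [n ->]; apply HM).
  destruct (growing_cv _ Hgrow Hub) as [l Hl]. apply is_lim_seq_Reals in Hl.
  exists l. split.
  - apply filterlim_locally. intros eps.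
    apply (filter_imp (fun n => ball l eps (sum_f_R0 a n))).
    + intros n Hn. rewrite sum_n_RtoC. split; [exact Hn | apply ball_center].
    + exact (proj1 (filterlim_locally _ _) Hl eps).
  - assert (Hle : Rbar_le l M)
      by (apply (is_lim_seq_le _ (fun _ => M) _ _ HM Hl), is_lim_seq_const).
    exact Hle.
Qed.

Theorem lemma3p4 :
  exists C0 : R, 0 < C0 /\
    forall x : R, 0 < x ->
      exists S : R,
        is_series (K := C_AbsRing) (V := C_NormedModule)
          (fun k : nat =>
             Cmult (RtoC (INR k))
               (Cplus (Cmult (BesselJ (Z.of_nat k) (RtoC x)) (BesselJ (Z.of_nat k) (RtoC x)))
                      (Cmult (BesselJ (- Z.of_nat k) (RtoC x)) (BesselJ (- Z.of_nat k) (RtoC x)))))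
          (RtoC S)
        /\ S <= C0 * x.
Proof.
  exists 4. split; [lra |]. intros x Hx. pose proof PI_RGT_0.
  set (A := bessel_int (fun _ => 1) x).
  set (t k := INR k * (A (INR k) ^ 2 + A (- INR k) ^ 2) * / (4 * PI ^ 2)).
  assert (Ht0 : forall k, 0 <= t k).
  { intro k. apply Rmult_le_pos; [apply Rmult_le_pos; [apply pos_INR | nra] |].
    left. apply Rinv_0_lt_compat. nra. }
  assert (Hsum : forall n, sum_f_R0 t n <= 4 * x).
  { intro n. unfold t. rewrite <- scal_sum.
    pose proof (sum_mult_bessel_int_sq_le x n (Rlt_le _ _ Hx)).
    replace (4 * x) with (/ (4 * PI ^ 2) * (16 * PI ^ 2 * x)) by (field; lra).
    apply Rmult_le_compat_l; [left; apply Rinv_0_lt_compat; nra | assumption]. }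
  destruct (is_series_RtoC_bounded t (4 * x) Ht0 Hsum) as [S [HS HSx]].
  exists S. split; [| exact HSx].
  refine (is_series_ext _ _ _ _ HS). intro k.
  rewrite !BesselJ_RtoC, opp_IZR, <- INR_IZR_INZ.
  unfold t, A, Cmult, Cplus, RtoC; simpl. f_equal; field; lra.
Qed.
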